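(* Let $\phi=(\phi_g,X_g,X)_{g\in G}$ be a partial action of a group $G$ on a set $X$ and let $\psi:G\to H$ be a group homomorphism. For $h\in H$ put $X_h:=\bigcup_{g\in G,\ \psi(g)=h}X_g$ and $\overline{\phi}_h:X_{h^{-1}}\to X_h$, $\overline{\phi}_h(x):=\phi_g(x)$ whenever $\psi(g)=h$ and $x\in X_{g^{-1}}$. Then these data give a well-defined partial action $\overline{\phi}=(\overline{\phi}_h,X_h,X)_{h\in H}$ of $H$ on $X$ if and only if for every $g\in\ker\psi$ one has $X_g=X_{g^{-1}}$ and $\phi_g=\operatorname{id}$ (on $X_{g^{-1}}$).
   Context: A partial action of a group $G$ (identity $\varepsilon$) on a set $X$ is $\phi=(\phi_g,X_g,X)_{g\in G}$ with $X_g\subseteq X$ and bijections $\phi_g:X_{g^{-1}}\to X_g$ such that (i) $X_\varepsilon=X$ and $\phi_\varepsilon=\operatorname{id}_X$; (ii) $\phi_g(X_{g^{-1}}\cap X_h)=X_g\cap X_{gh}$ for all $g,h$; (iii) $\phi_g(\phi_h(x))=\phi_{gh}(x)$ for all $g,h$ and $x\in X_{h^{-1}}\cap X_{h^{-1}g^{-1}}$. *)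

Record group := Group {
  gcar :> Type;
  gmul : gcar -> gcar -> gcar;
  ginv : gcar -> gcar;
  gone : gcar;
  gmulA : forall a b c, gmul a (gmul b c) = gmul (gmul a b) c;
  gmul1l : forall a, gmul gone a = a;
  gmulVl : forall a, gmul (ginv a) a = gone
}.

Arguments gmul {g} _ _.
Arguments ginv {g} _.
Arguments gone {g}.

Definition is_hom (G H : group) (psi : G -> H) : Prop :=
  forall a b : G, psi (gmul a b) = gmul (psi a) (psi b).

(* A partial action (phi_g, X_g, X)_{g in G}: D g is the subset X_g of X,
   f g is phi_g (a total function whose values outside X_{g^-1} are irrelevant). *)
Definition partial_action (G : group) (X : Type)
    (D : G -> X -> Prop) (f : G -> X -> X) : Prop :=
  (forall x, D gone x) /\ (forall x, f gone x = x) /\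
  (forall g : G,
     (forall x, D (ginv g) x -> D g (f g x)) /\
     (forall x y, D (ginv g) x -> D (ginv g) y -> f g x = f g y -> x = y) /\
     (forall y, D g y -> exists x, D (ginv g) x /\ f g x = y)) /\
  (forall (g h : G) (y : X),
     (D g y /\ D (gmul g h) y) <-> exists x, D (ginv g) x /\ D h x /\ f g x = y) /\
  (forall (g h : G) (x : X),
     D (ginv h) x -> D (gmul (ginv h) (ginv g)) x -> f g (f h x) = f (gmul g h) x).

Definition induced_dom (G H : group) (X : Type) (psi : G -> H)
    (D : G -> X -> Prop) (h : H) (x : X) : Prop :=
  exists g : G, psi g = h /\ D g x.

(* If every g in ker psi acts as the identity on X_{g^-1}, then phi_a and
   phi_b agree on X_{a^-1} ∩ X_{b^-1} whenever psi a = psi b: by (iii),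
   phi_b = phi_{b a^-1} ∘ phi_a there, and b a^-1 lies in the kernel.  So the
   induced map is well defined (evaluate through any preimage, chosen by
   epsilon), and each of its axioms is inherited from phi by choosing suitable
   representatives in G.  Conversely, the identity axiom of the induced action
   forces phi_g = id for g in the kernel.  The domain condition X_g = X_{g^-1}
   is automatic in both directions, because phi_g maps X_{g^-1} onto X_g. *)

From Stdlib Require Import ClassicalEpsilon.

Section GroupFacts.

Variable G : group.
Implicit Types a b : G.

Lemma mulgV a : gmul a (ginv a) = gone.
Proof.
  rewrite <- (gmul1l G (gmul a (ginv a))), <- (gmulVl G (ginv a)) at 1.
  rewrite <- gmulA, (gmulA G (ginv a) a (ginv a)), gmulVl, gmul1l.
  apply gmulVl.
Qed.

Lemma mulg1 a : gmul a gone = a.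
Proof. rewrite <- (gmulVl G a), gmulA, mulgV. apply gmul1l. Qed.

Lemma invg_unique a b : gmul b a = gone -> b = ginv a.
Proof. intro E. rewrite <- (mulg1 b), <- (mulgV a), gmulA, E. apply gmul1l. Qed.

Lemma invgK a : ginv (ginv a) = a.
Proof. symmetry. apply invg_unique, mulgV. Qed.

Lemma invgM a b : ginv (gmul a b) = gmul (ginv b) (ginv a).
Proof.
  symmetry. apply invg_unique.
  rewrite <- gmulA, (gmulA G (ginv a) a b), gmulVl, gmul1l. apply gmulVl.
Qed.

Lemma invg1 : ginv (@gone G) = gone.
Proof. symmetry. apply invg_unique, gmul1l. Qed.

Lemma mulKg a b : gmul (ginv a) (gmul a b) = b.
Proof. rewrite gmulA, gmulVl. apply gmul1l. Qed.

Lemma mulKVg a b : gmul a (gmul (ginv a) b) = b.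
Proof. rewrite gmulA, mulgV. apply gmul1l. Qed.

End GroupFacts.

Section Homomorphisms.

Variables (G H : group) (psi : G -> H).
Hypothesis psi_hom : is_hom G H psi.

Lemma hom1 : psi gone = gone.
Proof.
  assert (E : psi gone = gmul (psi gone) (psi gone)).
  { rewrite <- psi_hom, gmul1l. reflexivity. }
  rewrite <- (mulKg H (psi gone) (psi gone)), <- E. apply gmulVl.
Qed.

Lemma homV (a : G) : psi (ginv a) = ginv (psi a).
Proof. apply invg_unique. rewrite <- psi_hom, gmulVl. exact hom1. Qed.

End Homomorphisms.

Arguments hom1 {G H psi}.
Arguments homV {G H psi}.

Section PartialActionFacts.

Variables (G : group) (X : Type) (D : G -> X -> Prop) (f : G -> X -> X).
Hypothesis PA : partial_action G X D f.

Lemma pa_dom1 x : D gone x.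
Proof. apply PA. Qed.

Lemma pa_act1 x : f gone x = x.
Proof. apply PA. Qed.

Lemma pa_maps_to g x : D (ginv g) x -> D g (f g x).
Proof. apply PA. Qed.

Lemma pa_onto g y : D g y -> exists x, D (ginv g) x /\ f g x = y.
Proof. apply PA. Qed.

Lemma pa_dom_mul g h y :
  D g y /\ D (gmul g h) y <-> exists x, D (ginv g) x /\ D h x /\ f g x = y.
Proof. apply PA. Qed.

Lemma pa_act_mul g h x :
  D (ginv h) x -> D (gmul (ginv h) (ginv g)) x -> f g (f h x) = f (gmul g h) x.
Proof. apply PA. Qed.

Lemma pa_dom_act g h x : D (ginv g) x -> D h x -> D (gmul g h) (f g x).
Proof. intros dg dh. apply (pa_dom_mul g h). exists x. auto. Qed.

Lemma pa_actK g x : D (ginv g) x -> f (ginv g) (f g x) = x.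
Proof.
  intro dx. rewrite pa_act_mul, gmulVl; auto using pa_act1.
  rewrite invgK, gmulVl. apply pa_dom1.
Qed.

Lemma pa_actVK g y : D g y -> f g (f (ginv g) y) = y.
Proof.
  intro dy. rewrite <- (invgK G g) at 1. apply pa_actK. rewrite invgK. exact dy.
Qed.

Lemma pa_dom_sym_of_act_id g :
  (forall x, D (ginv g) x -> f g x = x) -> forall x, D g x <-> D (ginv g) x.
Proof.
  intros id_g x. split.
  - intro dx. destruct (pa_onto g x dx) as [x' [dx' <-]].
    rewrite id_g; assumption.
  - intro dx. rewrite <- (id_g x dx). apply pa_maps_to, dx.
Qed.

End PartialActionFacts.

Arguments pa_dom1 {G X D f}.
Arguments pa_act1 {G X D f}.
Arguments pa_maps_to {G X D f}.
Arguments pa_dom_mul {G X D f}.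
Arguments pa_act_mul {G X D f}.
Arguments pa_dom_act {G X D f}.
Arguments pa_actK {G X D f}.
Arguments pa_actVK {G X D f}.
Arguments pa_dom_sym_of_act_id {G X D f}.

Section InducedPartialAction.

Variables (G H : group) (X : Type) (D : G -> X -> Prop) (f : G -> X -> X).
Variable psi : G -> H.
Hypothesis PA : partial_action G X D f.
Hypothesis psi_hom : is_hom G H psi.

Definition act_trivially_on_kernel : Prop :=
  forall g, psi g = gone -> forall x, D (ginv g) x -> f g x = x.

Lemma act_trivially_on_kernel_of_extension (fbar : H -> X -> X) :
  (forall g x, D (ginv g) x -> fbar (psi g) x = f g x) ->
  (forall x, fbar gone x = x) -> act_trivially_on_kernel.
Proof.
  intros ext fbar1 g hg x dx. rewrite <- ext, hg by exact dx. apply fbar1.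
Qed.

Hypothesis ker_id : act_trivially_on_kernel.

Lemma act_compat a b x :
  psi a = psi b -> D (ginv a) x -> D (ginv b) x -> f a x = f b x.
Proof.
  intros hab da db.
  set (m := gmul b (ginv a)).
  assert (m_ker : psi m = gone).
  { unfold m. rewrite psi_hom, homV, <- hab by exact psi_hom. apply mulgV. }
  assert (m_inv : ginv m = gmul a (ginv b)).
  { unfold m. rewrite invgM, invgK. reflexivity. }
  assert (m_a : gmul m a = b).
  { unfold m. rewrite <- gmulA, gmulVl. apply mulg1. }
  rewrite <- m_a, <- (pa_act_mul PA m a x da).
  - symmetry. apply ker_id; [exact m_ker|].
    rewrite m_inv. apply (pa_dom_act PA); assumption.
  - rewrite m_inv, mulKg. exact db.
Qed.

Definition induced_act (h : H) (x : X) : X :=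
  f (epsilon (inhabits gone) (fun g => psi g = h /\ D (ginv g) x)) x.

Lemma induced_actE g x : D (ginv g) x -> induced_act (psi g) x = f g x.
Proof.
  intro dx. unfold induced_act.
  destruct (epsilon_spec (inhabits gone) (fun g' => psi g' = psi g /\ D (ginv g') x))
    as [e de]; [exists g; auto|].
  apply act_compat; assumption.
Qed.

Notation Dbar := (induced_dom G H X psi D).

Lemma induced_domV h x : Dbar (ginv h) x -> exists g, psi g = h /\ D (ginv g) x.
Proof.
  intros [g [hg dg]]. exists (ginv g). split.
  - rewrite homV, hg, invgK by exact psi_hom. reflexivity.
  - rewrite invgK. exact dg.
Qed.

Lemma induced_dom_of_inv g x : D (ginv g) x -> Dbar (ginv (psi g)) x.
Proof. intro dx. exists (ginv g). split; [apply homV, psi_hom | exact dx]. Qed.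

Lemma induced_maps_to h x : Dbar (ginv h) x -> Dbar h (induced_act h x).
Proof.
  intro dx. destruct (induced_domV h x dx) as [g [<- dg]].
  rewrite induced_actE by exact dg.
  exists g. split; [reflexivity | apply (pa_maps_to PA), dg].
Qed.

Lemma induced_inj h x y :
  Dbar (ginv h) x -> Dbar (ginv h) y -> induced_act h x = induced_act h y -> x = y.
Proof.
  intros dx dy e.
  destruct (induced_domV h x dx) as [g1 [<- d1]].
  destruct (induced_domV _ y dy) as [g2 [e2 d2]].
  rewrite induced_actE in e by exact d1.
  rewrite <- e2, induced_actE in e by exact d2.
  rewrite <- (pa_actK PA g1 x d1), <- (pa_actK PA g2 y d2), e.
  apply act_compat.
  - rewrite !homV, e2 by exact psi_hom. reflexivity.
  - rewrite invgK, <- e. apply (pa_maps_to PA), d1.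
  - rewrite invgK. apply (pa_maps_to PA), d2.
Qed.

Lemma induced_onto h y :
  Dbar h y -> exists x, Dbar (ginv h) x /\ induced_act h x = y.
Proof.
  intros [g [<- dg]].
  assert (dx : D (ginv (ginv g)) y) by (rewrite invgK; exact dg).
  assert (dgx : D (ginv g) (f (ginv g) y)) by apply (pa_maps_to PA), dx.
  exists (f (ginv g) y). split.
  - apply induced_dom_of_inv, dgx.
  - rewrite induced_actE by exact dgx. apply (pa_actVK PA), dg.
Qed.

Lemma induced_dom_mul a b y :
  Dbar a y /\ Dbar (gmul a b) y <->
  exists x, Dbar (ginv a) x /\ Dbar b x /\ induced_act a x = y.
Proof.
  split.
  - intros [[g1 [<- d1]] [g2 [h2 d2]]].
    destruct (proj1 (pa_dom_mul PA g1 (gmul (ginv g1) g2) y))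
      as [x [dx1 [dx2 ex]]].
    { rewrite mulKVg. auto. }
    exists x. split; [|split].
    + apply induced_dom_of_inv, dx1.
    + exists (gmul (ginv g1) g2). split; [|exact dx2].
      rewrite psi_hom, homV, h2 by exact psi_hom. apply mulKg.
    + rewrite induced_actE; assumption.
  - intros [x [dx [[g2 [<- d2]] ex]]].
    destruct (induced_domV a x dx) as [g1 [<- d1]].
    rewrite induced_actE in ex by exact d1.
    destruct (proj2 (pa_dom_mul PA g1 g2 y)) as [dy1 dy2].
    { exists x. auto. }
    split.
    + exists g1. auto.
    + exists (gmul g1 g2). split; [apply psi_hom | exact dy2].
Qed.

Lemma induced_act_mul a b x :
  Dbar (ginv b) x -> Dbar (gmul (ginv b) (ginv a)) x ->
  induced_act a (induced_act b x) = induced_act (gmul a b) x.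
Proof.
  intros db [k [hk dk]].
  destruct (induced_domV b x db) as [g2 [<- d2]].
  (* choose the representative g1 of a with g2^-1 g1^-1 = k *)
  set (g1 := ginv (gmul g2 k)).
  assert (e1 : gmul (ginv g2) (ginv g1) = k).
  { unfold g1. rewrite invgK. apply mulKg. }
  assert (ha : psi g1 = a).
  { unfold g1. rewrite homV, psi_hom, hk, mulKVg, invgK by exact psi_hom.
    reflexivity. }
  assert (dy : D (ginv g1) (f g2 x)).
  { unfold g1. rewrite invgK. apply (pa_dom_act PA); assumption. }
  rewrite <- ha, (induced_actE g2 x d2), (induced_actE g1 _ dy), <- psi_hom.
  rewrite induced_actE.
  - apply (pa_act_mul PA); [exact d2 | rewrite e1; exact dk].
  - rewrite invgM, e1. exact dk.
Qed.

Lemma induced_partial_action : partial_action H X Dbar induced_act.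
Proof.
  split; [|split; [|split; [|split]]].
  - intro x. exists gone. split; [exact (hom1 psi_hom) | apply (pa_dom1 PA)].
  - intro x. rewrite <- (hom1 psi_hom), induced_actE.
    + apply (pa_act1 PA).
    + rewrite invg1. apply (pa_dom1 PA).
  - intro h. split; [|split].
    + apply induced_maps_to.
    + apply induced_inj.
    + apply induced_onto.
  - apply induced_dom_mul.
  - apply induced_act_mul.
Qed.

End InducedPartialAction.

Theorem mainTheorem2 (G H : group) (X : Type) (D : G -> X -> Prop) (f : G -> X -> X)
    (psi : G -> H) :
  partial_action G X D f -> is_hom G H psi ->
  ((exists fbar : H -> X -> X,
      (forall (g : G) (x : X), D (ginv g) x -> fbar (psi g) x = f g x) /\
      partial_action H X (induced_dom G H X psi D) fbar)
   <->
   (forall g : G, psi g = gone ->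
      (forall x, D g x <-> D (ginv g) x) /\
      (forall x, D (ginv g) x -> f g x = x))).
Proof.
  intros PA psi_hom. split.
  - intros [fbar [ext PAbar]] g hg.
    assert (id_g : forall x, D (ginv g) x -> f g x = x).
    { apply (act_trivially_on_kernel_of_extension G H X D f psi fbar ext);
        [apply (pa_act1 PAbar) | exact hg]. }
    split; [apply (pa_dom_sym_of_act_id PA) |]; exact id_g.
  - intro ker.
    assert (ker_id : act_trivially_on_kernel G H X D f psi)
      by (intros g hg; apply (ker g hg)).
    exists (induced_act G H X D f psi). split.
    + apply induced_actE; assumption.
    + apply induced_partial_action; assumption.
Qed.
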